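(* Let $G=\operatorname{SL}(V)$ with $n=\dim V$ even. A unipotent element $u\in G$ acts on $(V\otimes V^*,b_V)$ as a distinguished unipotent element if and only if $n=2$ and $V\cong V_2$ as $K[u]$-modules.
   Context: $K$ is algebraically closed of characteristic 2; $V_d$ is the $d$-dimensional indecomposable $K[u]$-module, $X=u-1$. $b_V$ on $V\otimes V^*$ is $b_V(v\otimes f,v'\otimes f')=f(v')f'(v)+f(v)f'(v')$ (non-degenerate alternating when $n$ is even). For a non-degenerate alternating $u$-invariant form $c$ on $W$, let $\varepsilon_{W,c}(d)=0$ if $c(X^{d-1}w,w)=0$ for all $w$ with $X^dw=0$, and $1$ otherwise. We say $u$ acts on $(W,c)$ as a distinguished unipotent element if every Jordan block size $d$ of $u$ on $W$ is even, has multiplicity at most two, and satisfies $\varepsilon_{W,c}(d)=1$; equivalently, the image of $u$ in $\operatorname{Sp}(W,c)$ has centralizer containing no non-trivial torus. *)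

From HB Require Import structures.
From mathcomp Require Import all_boot all_order all_algebra.
Set Implicit Arguments. Unset Strict Implicit. Unset Printing Implicit Defensive.
Import Order.TTheory GRing.Theory Num.Theory.
Local Open Scope ring_scope.

Section Defs.
Variable K : fieldType.

Definition mxpow (m : nat) (A : 'M[K]_m) (k : nat) : 'M[K]_m :=
  iter k (mulmx A) 1%:M.

Definition unipotent (m : nat) (u : 'M[K]_m) : Prop :=
  exists k, mxpow (u - 1%:M) k = 0.

(* Number of Jordan blocks of size d (d >= 1) of the nilpotent part
   N = T - 1 of an endomorphism of W = 'rV_m (acting by w |-> w *m T):
   rk N^(d-1) - 2 rk N^d + rk N^(d+1). *)
Definition jordan_mult (m : nat) (T : 'M[K]_m) (d : nat) : int :=
  let N := T - 1%:M in
  (\rank (mxpow N d.-1))%:Z - 2%:Z * (\rank (mxpow N d))%:Z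
    + (\rank (mxpow N d.+1))%:Z.

Definition eps_one (m : nat) (T : 'M[K]_m) (c : 'rV[K]_m -> 'rV[K]_m -> K)
    (d : nat) : Prop :=
  let N := T - 1%:M in
  exists w : 'rV[K]_m, w *m mxpow N d = 0 /\ c (w *m mxpow N d.-1) w != 0.

Definition distinguished (m : nat) (T : 'M[K]_m)
    (c : 'rV[K]_m -> 'rV[K]_m -> K) : Prop :=
  forall d : nat, (0 < d)%N -> 0 < jordan_mult T d ->
    [/\ ~~ odd d, jordan_mult T d <= 2 & eps_one T c d].

(* V = 'cV_n (u acts by v |-> u v); V (x) V^* is identified with 'M_n via
   v (x) f |-> v *m f (f a row vector, f(v) = f *m v), so u acts on it by
   A |-> u A u^-1.  Elements of V (x) V^* are encoded as 'rV_(n*n) via mxvec. *)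
Definition tensor_action (n : nat) (u : 'M[K]_n) : 'M[K]_(n * n) :=
  lin_mx (fun A : 'M[K]_n => u *m A *m invmx u).

(* b_V(v (x) f, v' (x) f') = f(v') f'(v) + f(v) f'(v'), extended bilinearly:
   b_V(A, B) = tr(A B) + tr(A) tr(B). *)
Definition bV (n : nat) (x y : 'rV[K]_(n * n)) : K :=
  \tr (vec_mx x *m vec_mx y) + \tr (vec_mx x) * \tr (vec_mx y).

Definition jordan_unip (n : nat) : 'M[K]_n :=
  \matrix_(i < n, j < n) ((i == j) || (j == i.+1 :> nat))%:R.

Definition iso_Vn (n : nat) (u : 'M[K]_n) : Prop :=
  exists P : 'M[K]_n, P \in unitmx /\ u *m P = P *m jordan_unip n.

End Defs.

From HB Require Import structures.
From mathcomp Require Import all_boot all_order all_algebra.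
From mathcomp Require Import zify.
Set Implicit Arguments. Unset Strict Implicit. Unset Printing Implicit Defensive.
Import Order.TTheory GRing.Theory Num.Theory.
Local Open Scope ring_scope.

(* Let N = u - 1 and let X = Ad u - 1 be the nilpotent part of u on End V = V (x) V^*.
   In characteristic 2, X A = ad_N(A) u^-1 with ad_N(A) = N A + A N, and
   (ad_N)^(2^k) = ad_(N^(2^k)).  Let t be the nilpotency order of N and pick f, v
   with f N^(t-1) v = 1.
   - t odd: Z = sum_i N^i v f N^(t-1-i) is killed by X, but tr Z = t <> 0 while
     the image of X is traceless; so X has a Jordan block of size 1.
   - t >= 4 even: for the power of two M with M/2 < t <= M, X^M = 0 and
     rank X^(M-1) >= 3, i.e. X has at least three blocks of size M.
   - t = 2, n >= 3: X^2 = 0 and rank X >= 3, i.e. three blocks of size 2.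
   What remains is n = t = 2, i.e. u ~ V_2; then X has exactly two blocks of size 2
   and b_V(X w, w) = f(u v)^2 = 1 for w = v (x) f. *)

Section MxPow.
Variables (K : fieldType) (n : nat).
Implicit Types A B : 'M[K]_n.

Lemma mxpowS A k : mxpow A k.+1 = A *m mxpow A k.
Proof. by []. Qed.

Lemma mxpow1 A : mxpow A 1 = A.
Proof. by rewrite mxpowS mulmx1. Qed.

Lemma mxpowD A a b : mxpow A (a + b) = mxpow A a *m mxpow A b.
Proof. by elim: a => [|a IH]; rewrite ?mul1mx // addSn mxpowS IH mulmxA. Qed.

Lemma mxpowSr A k : mxpow A k.+1 = mxpow A k *m A.
Proof. by rewrite -addn1 mxpowD mxpow1. Qed.

Lemma mxpow_commute A B k : A *m B = B *m A -> mxpow A k *m B = B *m mxpow A k.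
Proof.
move=> AB; elim: k => [|k IH]; first by rewrite mul1mx mulmx1.
by rewrite mxpowS -mulmxA IH !mulmxA AB.
Qed.

Lemma mxpow_eq0_leq A a b : mxpow A a = 0 -> (a <= b)%N -> mxpow A b = 0.
Proof. by move=> Aa /subnKC <-; rewrite mxpowD Aa mul0mx. Qed.

Lemma mulmx_mxpow_eq1 A B k : A *m B = 1%:M -> mxpow A k *m mxpow B k = 1%:M.
Proof.
move=> AB; elim: k => [|k IH]; first by rewrite mul1mx.
by rewrite mxpowSr mxpowS -mulmxA (mulmxA A) AB mul1mx.
Qed.

End MxPow.

Section Char2.
Variables (K : fieldType) (hK : 2%N \in [pchar K]).

Lemma addrr_lmod_pchar2 (V : lmodType K) (x : V) : x + x = 0.
Proof. by rewrite -mulr2n -scaler_nat (pcharf0 hK) scale0r. Qed.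

Lemma oppr_lmod_pchar2 (V : lmodType K) (x : V) : - x = x.
Proof. by rewrite -[- x]add0r -(addrr_lmod_pchar2 x) addrK. Qed.

Lemma subr_lmod_pchar2 (V : lmodType K) (x y : V) : x - y = x + y.
Proof. by rewrite oppr_lmod_pchar2. Qed.

Lemma natr_pchar2 t : t%:R = (odd t)%:R :> K.
Proof. by rewrite {1}(divn_eq t 2) modn2 natrD natrM (pcharf0 hK) mulr0 add0r. Qed.

End Char2.

Lemma exists_exp2_bracket t : ~~ odd t -> (4 <= t)%N ->
  exists k, (t <= 2 ^ k)%N /\ (2 ^ k + 3 <= 2 * t)%N.
Proof.
move=> t_even t4; set k := trunc_log 2 t.-1.
have /andP [lo hi] : (2 ^ k <= t.-1 < 2 ^ k.+1)%N by apply: trunc_log_bounds; lia.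
have k1 : (1 <= k)%N by apply: trunc_log_max => //; rewrite expn1; lia.
have [q kq] : exists q, (2 ^ k = 2 * q)%N by exists (2 ^ k.-1)%N; rewrite -expnS prednK.
have [r tr] : exists r, t = (2 * r)%N.
  by exists t./2; rewrite -[t in LHS]odd_double_half (negbTE t_even) -mul2n.
exists k.+1; rewrite expnS in hi *; lia.
Qed.

Section LinearAlgebra.
Variable K : fieldType.

Lemma leq_rank_unitriangular m r (M : 'M[K]_m) (w : 'I_r -> 'rV_m) (g : 'I_r -> 'cV_m) :
  (forall i, w i *m M *m g i = 1%:M) ->
  (forall i j : 'I_r, (j < i)%N -> w i *m M *m g j = 0) -> (r <= \rank M)%N.
Proof.
move=> diag lower.
pose W : 'M_(r, m) := \matrix_i w i.
pose G : 'M_(m, r) := \matrix_(k, j) g j k 0.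
pose B := W *m M *m G.
have BE i j : B i j = (w i *m M *m g j) 0 0.
  rewrite !mxE; apply: eq_bigr => k _; rewrite !mxE; congr (_ * _).
  by apply: eq_bigr => l _; rewrite !mxE.
have detB : \det B = 1.
  rewrite -det_tr det_trig; last by apply/is_trig_mxP => i j ij; rewrite mxE BE lower // mxE.
  by apply: big1 => i _; rewrite mxE BE diag mxE.
have unitB : B \in unitmx by rewrite unitmxE detB unitr1.
rewrite -(mxrank_unit unitB); apply: leq_trans (mxrankM_maxl _ _) _.
exact: mxrankM_maxr.
Qed.

Lemma exists_row_neq0 m p (B : 'M[K]_(m, p)) : B != 0 -> exists i, row i B != 0.
Proof.
move=> B0; apply/existsP; apply: contraNT B0 => /existsPn rows0.
by apply/eqP/row_matrixP => i; rewrite row0; apply/eqP/negPn/rows0.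
Qed.

Lemma exists_rV_mul_eq1 p (h : 'rV[K]_p) : h != 0 -> exists w : 'cV_p, h *m w = 1%:M.
Proof.
move=> h0; apply/row_freeP; rewrite /row_free eqn_leq rank_leq_row lt0n.
by rewrite mxrank_eq0.
Qed.

Lemma exists_mul_mx_eq1 m p (B : 'M[K]_(m, p)) :
  B != 0 -> exists (f : 'rV_m) (v : 'cV_p), f *m B *m v = 1%:M.
Proof.
case/exists_row_neq0=> i /exists_rV_mul_eq1 [v Bv].
by exists (delta_mx 0 i), v; rewrite -rowE.
Qed.

Lemma exists_nilpotent_order n (A : 'M[K]_n) : (0 < n)%N ->
  (exists k, mxpow A k = 0) ->
  exists t (f : 'rV_n) (v : 'cV_n),
    [/\ (0 < t)%N, mxpow A t = 0 & f *m mxpow A t.-1 *m v = 1%:M].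
Proof.
move=> n0 nilA; have {nilA} : exists k, mxpow A k == 0 by case: nilA => k /eqP; exists k.
case/ex_minnP=> t /eqP At t_min.
have t0 : (0 < t)%N.
  case: t At t_min => // A0 _; move: n0.
  by rewrite -(mxrank1 K n) -[1%:M]/(mxpow A 0) A0 mxrank0.
have : mxpow A t.-1 != 0 by apply/negP => /t_min; lia.
by case/exists_mul_mx_eq1=> f [v ft]; exists t, f, v.
Qed.

Lemma exists_rV_orthogonal2 p (a b : 'cV[K]_p) : (3 <= p)%N ->
  exists (h : 'rV_p) (w : 'cV_p), [/\ h *m a = 0, h *m b = 0 & h *m w = 1%:M].
Proof.
move=> p3; set C := row_mx a b.
have : kermx C != 0.
  by rewrite -mxrank_eq0 mxrank_ker; have := rank_leq_col C; lia.
case/exists_row_neq0=> i /exists_rV_mul_eq1 [w hw].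
have : row i (kermx C) *m C = 0 by rewrite -row_mul mulmx_ker row0.
rewrite mul_mx_row => /eqP; rewrite row_mx_eq0 => /andP [/eqP ha /eqP hb].
by exists (row i (kermx C)), w.
Qed.

Lemma mxtrace_mul_rank1 n (a b : 'cV[K]_n) (g h : 'rV_n) :
  \tr (a *m g *m (b *m h)) = (g *m b) 0 0 * (h *m a) 0 0.
Proof.
rewrite -mulmxA mxtrace_mulC mulmxA -(mulmxA (g *m b)).
by rewrite /mxtrace big_ord1 mxE big_ord1.
Qed.

(* When [N *m N = 0], [v] generates a Jordan block of size 2 and [f] is dual to [N v]. *)
Definition jordan2_pair n (N : 'M[K]_n) (f : 'rV_n) (v : 'cV_n) :=
  f *m v = 0 /\ f *m N *m v = 1%:M.

Lemma exists_jordan2_pair n (N : 'M[K]_n) (f0 : 'rV_n) (v : 'cV_n) :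
  N *m N = 0 -> f0 *m N *m v = 1%:M -> exists f, jordan2_pair N f v.
Proof.
move=> NN f0Nv; exists (f0 - f0 *m v *m (f0 *m N)); rewrite /jordan2_pair !mulmxBl.
split; first by rewrite -!mulmxA (mulmxA f0 N v) f0Nv mulmx1 subrr.
by rewrite -!mulmxA (mulmxA N N) NN mul0mx !mulmx0 subr0 mulmxA.
Qed.

End LinearAlgebra.

Section JordanMult.
Variables (K : fieldType) (m : nat) (T : 'M[K]_m).
Local Notation N := (T - 1%:M).

Lemma jordan_mult_top d : mxpow N d = 0 -> (0 < d)%N ->
  jordan_mult T d = (\rank (mxpow N d.-1))%:Z.
Proof.
move=> Nd d0; rewrite /jordan_mult; cbv zeta; rewrite Nd (mxpow_eq0_leq Nd (leqnSn d)) mxrank0.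
by rewrite mulr0 subr0 addr0.
Qed.

Lemma jordan_mult_eq0 d : mxpow N d.-1 = 0 -> jordan_mult T d = 0.
Proof.
move=> Nd; rewrite /jordan_mult; cbv zeta.
by rewrite Nd !(mxpow_eq0_leq Nd) ?mxrank0 // ?mulr0; lia.
Qed.

Lemma jordan_mult1_gt0 (z : 'rV[K]_m) :
  z *m N = 0 -> ~~ (z <= N)%MS -> 0 < jordan_mult T 1.
Proof.
move=> zN z_notin; rewrite /jordan_mult /= !mulmx1 mxrank1.
have := mxrank_mul_ker N N; have := rank_leq_row N.
have capS : (N :&: kermx N <= kermx N)%MS := capmxSr _ _.
have : (\rank (N :&: kermx N) < \rank (kermx N))%N.
  rewrite ltn_neqAle (mxrank_leqif_sup capS).2 (mxrank_leqif_sup capS).1 andbT.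
  have zK : (z <= kermx N)%MS by apply/sub_kermxP.
  apply: contra z_notin => /(submx_trans zK) /submx_trans; apply.
  exact: capmxSl.
rewrite mxrank_ker; lia.
Qed.

Lemma distinguished_jordan_mult1 c :
  distinguished T c -> jordan_mult T 1 <= 0.
Proof. by move=> dT; rewrite leNgt; apply/negP => /(dT 1%N isT) []. Qed.

Lemma distinguished_jordan_mult_le2 c d :
  distinguished T c -> (0 < d)%N -> jordan_mult T d <= 2.
Proof.
move=> dT d0; have [jpos|] := ltP 0 (jordan_mult T d); first by case: (dT d d0 jpos).
by move/le_trans; apply.
Qed.

End JordanMult.

Section Anticommutator.
Variables (K : fieldType) (hK : 2%N \in [pchar K]) (n : nat).
Implicit Types N A : 'M[K]_n.

Definition anticomm N A := N *m A + A *m N.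

Definition sandwich_sum N A m :=
  \sum_(i < m) mxpow N i *m A *m mxpow N (m.-1 - i).

Lemma anticomm0l A : anticomm 0 A = 0.
Proof. by rewrite /anticomm mulmx0 mul0mx addr0. Qed.

Lemma anticommK N A : anticomm N (anticomm N A) = anticomm (N *m N) A.
Proof.
rewrite /anticomm mulmxDr mulmxDl !mulmxA addrA -(addrA (N *m N *m A)).
by rewrite (addrr_lmod_pchar2 hK (N *m A *m N)) addr0 -mulmxA.
Qed.

Lemma iter_anticomm_exp2 N A k :
  iter (2 ^ k) (anticomm N) A = anticomm (mxpow N (2 ^ k)) A.
Proof.
elim: k A => [|k IH] A; first by rewrite mxpow1.
by rewrite expnS mul2n -addnn iterD !IH anticommK -mxpowD.
Qed.

Lemma iter_anticomm_exp2_pred N A k :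
  iter (2 ^ k).-1 (anticomm N) A = sandwich_sum N A (2 ^ k).
Proof.
rewrite /sandwich_sum; elim: k => [|k IH]; first by rewrite big_ord1 mul1mx mulmx1.
have p0 : (0 < 2 ^ k)%N by rewrite expn_gt0.
have -> : (2 ^ k.+1).-1 = (2 ^ k + (2 ^ k).-1)%N by rewrite expnS mul2n -addnn; lia.
rewrite iterD iter_anticomm_exp2 IH /anticomm mulmx_sumr mulmx_suml.
rewrite expnS mul2n -addnn big_split_ord /= addrC; congr (_ + _).
  apply: eq_bigr => i _ /=.
  have -> : (2 ^ k + (2 ^ k).-1 - (2 ^ k + i) = (2 ^ k).-1 - i)%N by lia.
  by rewrite mxpowD !mulmxA.
apply: eq_bigr => i _ /=.
have -> : (2 ^ k + (2 ^ k).-1 - i = ((2 ^ k).-1 - i) + 2 ^ k)%N by have := ltn_ord i; lia.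
by rewrite mxpowD !mulmxA.
Qed.

(* Telescoping: [N *m S] and [S *m N] are the same sum shifted by one index. *)
Lemma anticomm_sandwich_sum N A m :
  anticomm N (sandwich_sum N A m) = anticomm (mxpow N m) A.
Proof.
pose a i := mxpow N i *m A *m mxpow N (m - i).
have NS : N *m sandwich_sum N A m = \sum_(i < m) a i.+1.
  rewrite mulmx_sumr; apply: eq_bigr => i _.
  rewrite /a !mulmxA -mxpowS; congr (_ *m mxpow N _); have := ltn_ord i; lia.
have SN : sandwich_sum N A m *m N = \sum_(i < m) a i.
  rewrite mulmx_suml; apply: eq_bigr => i _.
  rewrite /a -mulmxA -mxpowSr; congr (_ *m mxpow N _); have := ltn_ord i; lia.
have sumS : \sum_(i < m.+1) a i = a 0%N + \sum_(i < m) a i.+1 by rewrite big_ord_recl.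
rewrite big_ord_recr /= in sumS.
rewrite /anticomm NS SN.
have -> : \sum_(i < m) a i.+1 = \sum_(i < m) a i + (a m + a 0%N).
  by rewrite addrA sumS addrAC (addrr_lmod_pchar2 hK) add0r.
rewrite addrAC (addrr_lmod_pchar2 hK) add0r.
by rewrite /a subnn subn0 mul1mx mulmx1.
Qed.

Lemma mxtrace_sandwich_sum N (v : 'cV_n) (f : 'rV_n) m :
  \tr (sandwich_sum N (v *m f) m) = m%:R * (f *m mxpow N m.-1 *m v) 0 0.
Proof.
rewrite mulr_natl -[X in _ *+ X]card_ord -sumr_const /sandwich_sum.
rewrite (linear_sum (@mxtrace K n)) /=.
apply: eq_bigr => i _.
rewrite mulmxA -mulmxA mxtrace_mulC mulmxA -[in LHS](mulmxA f) -mxpowD subnK.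
  by rewrite /mxtrace big_ord1.
by rewrite -ltnS prednK ?ltn_ord // (leq_ltn_trans _ (ltn_ord i)).
Qed.

Lemma pairing_sandwich_sum N (v : 'cV_n) (f : 'rV_n) m b c :
  f *m sandwich_sum N (mxpow N c *m (v *m f)) m *m (mxpow N b *m v)
  = \sum_(i < m) f *m mxpow N (i + c) *m v *m (f *m mxpow N (m.-1 - i + b) *m v).
Proof.
rewrite mulmx_sumr mulmx_suml; apply: eq_bigr => i _.
by rewrite !mxpowD !mulmxA.
Qed.

End Anticommutator.

Section TensorAction.
Variables (K : fieldType) (hK : 2%N \in [pchar K]) (n : nat) (u : 'M[K]_n).
Hypothesis uU : u \in unitmx.
Local Notation N := (u - 1%:M).
Local Notation X := (tensor_action u - 1%:M).

Definition conj_sub1 (A : 'M[K]_n) := u *m A *m invmx u - A.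

Lemma mul_mx_tensor_sub1_pow (w : 'rV_(n * n)) j :
  w *m mxpow X j = mxvec (iter j conj_sub1 (vec_mx w)).
Proof.
elim: j w => [|j IH] w; first by rewrite mulmx1 vec_mxK.
rewrite mxpowS mulmxA IH iterSr mulmxBr mulmx1 /tensor_action.
have -> : (fun A => u *m A *m invmx u) = mulmxr (invmx u) \o mulmx u by [].
by rewrite mul_rV_lin linearB /= !mxvecK.
Qed.

Lemma mxtrace_conj_sub1 A : \tr (conj_sub1 A) = 0.
Proof. by rewrite linearB /= mxtrace_mulC mulmxA mulVmx // mul1mx subrr. Qed.

Lemma bV_tensor_sub1_rank1 (v : 'cV_n) (f : 'rV_n) :
  bV (mxvec (v *m f) *m X) (mxvec (v *m f))
  = (f *m invmx u *m v) 0 0 * (f *m u *m v) 0 0 - (f *m v) 0 0 ^+ 2.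
Proof.
rewrite -[X]mxpow1 mul_mx_tensor_sub1_pow /bV !mxvecK /=.
rewrite mxtrace_conj_sub1 mul0r addr0 mulmxBl linearB /=.
have -> : u *m (v *m f) *m invmx u = u *m v *m (f *m invmx u) by rewrite !mulmxA.
by rewrite !mxtrace_mul_rank1 -!mulmxA.
Qed.


Lemma conj_sub1_anticomm A : conj_sub1 A = anticomm N A *m invmx u.
Proof.
rewrite /conj_sub1 /anticomm mulmxBl mulmxBr mul1mx mulmx1.
rewrite addrACA -opprD (addrr_lmod_pchar2 hK A) oppr0 addr0.
by rewrite mulmxDl -(mulmxA A) mulmxV // mulmx1 (subr_lmod_pchar2 hK).
Qed.

Lemma iter_conj_sub1 j A :
  iter j conj_sub1 A = iter j (anticomm N) A *m mxpow (invmx u) j.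
Proof.
have uN : invmx u *m N = N *m invmx u.
  by rewrite mulmxBr mulmxBl mulVmx // mulmxV // mul1mx mulmx1.
elim: j => [|j IH]; first by rewrite mulmx1.
have PN := mxpow_commute j uN.
rewrite !iterS IH conj_sub1_anticomm mxpowSr mulmxA; congr (_ *m _).
set B := iter j _ A; set P := mxpow _ j.
by rewrite /anticomm mulmxDl !mulmxA -!mulmxA PN.
Qed.

Lemma mul_mx_tensor_sub1_pow_anticomm (w : 'rV_(n * n)) j :
  w *m mxpow X j = mxvec (iter j (anticomm N) (vec_mx w) *m mxpow (invmx u) j).
Proof. by rewrite mul_mx_tensor_sub1_pow iter_conj_sub1. Qed.

Lemma tensor_sub1_pow_eq0 j :
  (forall A, iter j (anticomm N) A = 0) -> mxpow X j = 0.
Proof.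
move=> adj0; apply/row_matrixP => i.
by rewrite row0 rowE mul_mx_tensor_sub1_pow_anticomm adj0 mul0mx linear0.
Qed.

Lemma leq_rank_tensor_sub1_pow r j (f : 'rV[K]_n) (A : 'I_r -> 'M_n) (psi : 'I_r -> 'cV_n) :
  (forall i, f *m iter j (anticomm N) (A i) *m psi i = 1%:M) ->
  (forall i k : 'I_r, (k < i)%N -> f *m iter j (anticomm N) (A i) *m psi k = 0) ->
  (r <= \rank (mxpow X j))%N.
Proof.
move=> diag lower.
pose g k := lin1_mx (mulmxr (mxpow u j *m psi k) \o mulmx f \o vec_mx).
have pairing i k :
    mxvec (A i) *m mxpow X j *m g k = f *m iter j (anticomm N) (A i) *m psi k.
  rewrite mul_rV_lin1 /= mul_mx_tensor_sub1_pow_anticomm !mxvecK -!mulmxA.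
  by rewrite (mulmxA (mxpow _ j)) mulmx_mxpow_eq1 ?mul1mx // mulVmx.
apply: (@leq_rank_unitriangular _ _ _ _ (fun i => mxvec (A i)) g) => [i|i k ki].
  by rewrite pairing diag.
by rewrite pairing lower.
Qed.

Lemma leq_rank_tensor_sub1 r f v (g : 'I_r -> 'rV[K]_n) (x : 'I_r -> 'cV[K]_n) :
  jordan2_pair N f v -> (forall i, g i *m x i = 1%:M) ->
  (forall i k : 'I_r, (k < i)%N -> g i *m x k = 0) -> (r <= \rank X)%N.
Proof.
case=> fv fNv diag lower; rewrite -[X]mxpow1.
have pairing g' x' : f *m iter 1 (anticomm N) (v *m g') *m x' = g' *m x'.
  by rewrite /= /anticomm mulmxDr mulmxDl !mulmxA fNv fv mul1mx !mul0mx addr0.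
apply: (@leq_rank_tensor_sub1_pow r 1 f (fun i => v *m g i) x) => [i|i k ki].
  by rewrite pairing diag.
by rewrite pairing lower.
Qed.

Lemma rank_tensor_sub1_geq2 f v : jordan2_pair N f v -> (2 <= \rank X)%N.
Proof.
move=> fv; have [f_v fNv] := fv.
apply: (@leq_rank_tensor_sub1 2 f v (fun i => nth 0 [:: f *m N; f] i)
                              (fun i => nth 0 [:: v; N *m v] i)) => //.
  by case=> [[|[|]]] //= _; rewrite ?mulmxA.
by case=> [[|[|]]] // ? [[|[|]]].
Qed.

Lemma rank_tensor_sub1_geq3 f v (h : 'rV[K]_n) (w : 'cV[K]_n) :
  jordan2_pair N f v -> h *m v = 0 -> h *m N *m v = 0 -> h *m w = 1%:M ->
  (3 <= \rank X)%N.
Proof.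
move=> fv hv hNv hw; have [f_v fNv] := fv.
apply: (@leq_rank_tensor_sub1 3 f v (fun i => nth 0 [:: f *m N; f; h] i)
                              (fun i => nth 0 [:: v; N *m v; w] i)) => //.
  by case=> [[|[|[|]]]] //= _; rewrite ?mulmxA.
by case=> [[|[|[|]]]] // ? [[|[|[|]]]] //= _ _; rewrite ?mulmxA.
Qed.

Lemma tensor_sub1_sqr_eq0 : N *m N = 0 -> mxpow X 2 = 0.
Proof.
move=> NN; apply: tensor_sub1_pow_eq0 => A.
by have := iter_anticomm_exp2 hK N A 1; rewrite expn1 => ->; rewrite /= mulmx1 NN anticomm0l.
Qed.

Lemma jordan_mult1_tensor_gt0 t (f : 'rV[K]_n) (v : 'cV[K]_n) : odd t -> mxpow N t = 0 ->
  f *m mxpow N t.-1 *m v = 1%:M -> 0 < jordan_mult (tensor_action u) 1.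
Proof.
move=> t_odd Nt ft; set Z := sandwich_sum N (v *m f) t.
apply: (@jordan_mult1_gt0 _ _ _ (mxvec Z)).
  rewrite -[X]mxpow1 mul_mx_tensor_sub1_pow_anticomm /= mxvecK.
  by rewrite anticomm_sandwich_sum // Nt anticomm0l mul0mx linear0.
apply/negP => /submxP [D ZD].
have : \tr Z = 0.
  by rewrite -[Z]mxvecK ZD -[X]mxpow1 mul_mx_tensor_sub1_pow mxvecK mxtrace_conj_sub1.
rewrite mxtrace_sandwich_sum ft mxE eqxx mulr1 (natr_pchar2 hK) t_odd => /eqP.
by rewrite oner_eq0.
Qed.

(* With [M] the power of 2 such that [M/2 < t <= M], the matrices [N^c v f] and the
   vectors [N^(2t-1-M-c) v], c < 3, pair unitriangularly under [X^(M-1)]. *)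
Lemma jordan_mult_tensor_gt2 t (f : 'rV[K]_n) (v : 'cV[K]_n) :
  ~~ odd t -> (4 <= t)%N -> mxpow N t = 0 -> f *m mxpow N t.-1 *m v = 1%:M ->
  exists2 d, (0 < d)%N & 2 < jordan_mult (tensor_action u) d.
Proof.
move=> t_even t4 Nt ft; have [k [tM Mt]] := exists_exp2_bracket t_even t4.
set M := (2 ^ k)%N in tM Mt *; set s := (2 * t - 1 - M)%N.
have M0 : (0 < M)%N by rewrite expn_gt0.
have XM : mxpow X M = 0.
  apply: tensor_sub1_pow_eq0 => A.
  by rewrite iter_anticomm_exp2 // (mxpow_eq0_leq Nt tM) anticomm0l.
exists M => //; rewrite jordan_mult_top // ltz_nat.
pose a m := f *m mxpow N m *m v.
have a_top m : (t <= m)%N -> a m = 0.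
  by move=> tm; rewrite /a (mxpow_eq0_leq Nt tm) mulmx0 mul0mx.
have vanish (j : 'I_M) c b : (b <= c <= 2)%N -> (j != (t.-1 - c)%N :> nat) || (b != c) ->
    a (j + c)%N *m a (M.-1 - j + (s - b))%N = 0.
  move=> bc jcb; have [tj|jt] := leqP t (j + c); first by rewrite a_top ?mul0mx.
  rewrite (a_top (M.-1 - j + (s - b))%N) ?mulmx0 //.
  by have := ltn_ord j; move: jcb; rewrite /s; lia.
apply: (@leq_rank_tensor_sub1_pow 3 M.-1 f (fun c => mxpow N c *m (v *m f))
                                   (fun c => mxpow N (s - c) *m v)) => [c|c b bc].
  rewrite iter_anticomm_exp2_pred // pairing_sandwich_sum.
  have ct : (t.-1 - c < M)%N by lia.
  rewrite (bigD1 (Ordinal ct)) //= big1 ?addr0 => [|j jc]; last first.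
    by apply: vanish; [have := ltn_ord c; lia | apply/orP; left].
  rewrite -/M -/(a _) -/(a _).
  have -> : (t.-1 - c + c = t.-1)%N by have := ltn_ord c; lia.
  have -> : (M.-1 - (t.-1 - c) + (s - c) = t.-1)%N by have := ltn_ord c; lia.
  by rewrite /a ft mul1mx.
rewrite iter_anticomm_exp2_pred // pairing_sandwich_sum; apply: big1 => j _.
apply: vanish; first by have := ltn_ord c; lia.
by apply/orP; right; rewrite neq_ltn bc.
Qed.

Lemma distinguished_tensor_nilpotent_order t (f : 'rV[K]_n) (v : 'cV[K]_n) :
  distinguished (tensor_action u) (@bV K n) -> (0 < t)%N -> mxpow N t = 0 ->
  f *m mxpow N t.-1 *m v = 1%:M -> t = 2%N.
Proof.
move=> dist t0 Nt ft; case t_odd: (odd t).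
  have := distinguished_jordan_mult1 dist.
  by rewrite leNgt (jordan_mult1_tensor_gt0 t_odd Nt ft).
have [t4|] := leqP 4 t.
  have [d d0 jd] := jordan_mult_tensor_gt2 (negbT t_odd) t4 Nt ft.
  by have := distinguished_jordan_mult_le2 dist d0; rewrite leNgt jd.
by move: t0 t_odd; case: t {Nt ft} => [|[|[|[|]]]].
Qed.

Lemma distinguished_tensor_dim (f : 'rV[K]_n) (v : 'cV[K]_n) :
  distinguished (tensor_action u) (@bV K n) -> N *m N = 0 -> jordan2_pair N f v ->
  (n <= 2)%N.
Proof.
move=> dist NN fv; rewrite leqNgt; apply/negP => n3.
have [h [w [hv hNv hw]]] := exists_rV_orthogonal2 v (N *m v) n3.
rewrite mulmxA in hNv; have := rank_tensor_sub1_geq3 fv hv hNv hw.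
have := distinguished_jordan_mult_le2 dist (isT : 0 < 2)%N.
by rewrite jordan_mult_top ?tensor_sub1_sqr_eq0 // mxpow1 lez_nat; lia.
Qed.

End TensorAction.

Section Dimension2.
Variable K : fieldType.
Hypothesis hK : 2%N \in [pchar K].
Implicit Types u : 'M[K]_2.

Lemma ord2_split (i : 'I_(1 + 1)) : i = lshift 1 0 \/ i = rshift 1 0.
Proof. by case: i => [[|[|//]] ?]; [left | right]; apply: val_inj. Qed.

Lemma jordan_unip2_block :
  jordan_unip K 2 = block_mx 1%:M 1%:M 0 1%:M :> 'M_(1 + 1).
Proof.
apply/matrixP => i j.
case: (ord2_split i) => ->; case: (ord2_split j) => ->;
  by rewrite ?block_mxEul ?block_mxEur ?block_mxEdl ?block_mxEdr !mxE.
Qed.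

Lemma jordan_unip2_sub1 : jordan_unip K 2 - 1%:M = delta_mx 0 1.
Proof.
apply/matrixP => i j; rewrite !mxE.
by case: i => [[|[|//]] ?]; case: j => [[|[|//]] ?]; rewrite ?subrr ?subr0.
Qed.

Lemma iso_Vn2P u : iso_Vn u <->
  (u - 1%:M) *m (u - 1%:M) = 0 /\ exists f v, jordan2_pair (u - 1%:M) f v.
Proof.
split=> [[P [Pu uP]] | [NN [f [v [fv fNv]]]]].
  have NP : (u - 1%:M) *m P = P *m delta_mx 0 1.
    by rewrite -jordan_unip2_sub1 mulmxBl uP mul1mx mulmxBr mulmx1.
  have PVP : invmx P *m P = 1%:M by rewrite mulVmx.
  split.
    have NNP : (u - 1%:M) *m (u - 1%:M) *m P = 0.
      by rewrite -mulmxA NP mulmxA NP -mulmxA mul_delta_mx_0 // mulmx0.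
    by move/(congr1 (mulmx^~ (invmx P))): NNP; rewrite mul0mx mulmxK.
  exists (delta_mx 0 0 *m invmx P), (P *m delta_mx 1 0); split.
    by rewrite mulmxA -(mulmxA _ _ P) PVP mulmx1 mul_delta_mx_0.
  rewrite -mulmxA -mulmxA (mulmxA _ P) NP -mulmxA mul_delta_mx !mulmxA -(mulmxA _ _ P) PVP.
  by rewrite mulmx1 mul_delta_mx; apply/matrixP => i j; rewrite !ord1 !mxE.
pose P : 'M_(2, 1 + 1) := row_mx ((u - 1%:M) *m v) v.
have PV : col_mx f (f *m (u - 1%:M)) *m P = 1%:M.
  rewrite mul_col_row !mulmxA fNv fv -(mulmxA f) NN mulmx0 mul0mx.
  by rewrite scalar_mx_block.
exists P; split; first by case: (mulmx1_unit PV).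
have NP : (u - 1%:M) *m P = row_mx 0 ((u - 1%:M) *m v).
  by rewrite mul_mx_row mulmxA NN mul0mx.
change (u *m P = P *m (jordan_unip K 2 : 'M_(1 + 1))).
rewrite -[u in LHS](subrK 1%:M) mulmxDl NP mul1mx add_row_mx add0r.
by rewrite jordan_unip2_block mul_row_block !mulmx1 !mulmx0 addr0.
Qed.

Lemma distinguished_tensor2 u (f : 'rV[K]_2) (v : 'cV[K]_2) :
  u \in unitmx -> (u - 1%:M) *m (u - 1%:M) = 0 -> jordan2_pair (u - 1%:M) f v ->
  distinguished (tensor_action u) (@bV K 2).
Proof.
move=> uU NN fv; have [f_v fNv] := fv.
set X := tensor_action u - 1%:M.
have X2 : mxpow X 2 = 0 by apply: tensor_sub1_sqr_eq0.
have XX : X *m X = 0 by rewrite -X2 mxpowS mxpow1.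
have rX : \rank X = 2%N.
  apply/eqP; rewrite eqn_leq (rank_tensor_sub1_geq2 hK uU fv) andbT.
  have : (X <= kermx X)%MS by exact/sub_kermxP.
  by move/mxrankS; rewrite mxrank_ker; lia.
have uu : u *m u = 1%:M.
  move: NN; rewrite (subr_lmod_pchar2 hK) mulmxDl !mulmxDr !mul1mx mulmx1.
  rewrite addrA -(addrA (u *m u)) (addrr_lmod_pchar2 hK u) addr0 => /eqP.
  by rewrite addr_eq0 (oppr_lmod_pchar2 hK) => /eqP.
move=> d d0; case: d d0 => [|[|[|d]]] // _ jd.
- by move: jd; rewrite /jordan_mult /= -/X !mulmx1 mxrank1 rX XX mxrank0.
- rewrite jordan_mult_top // mxpow1 rX; split => //.
  exists (mxvec (v *m f)); rewrite /= -/X !mulmx1 XX mulmx0; split => //.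
  have uV : invmx u = u by rewrite -[invmx u]mulmx1 -uu mulmxA mulVmx // mul1mx.
  have fuv : f *m u *m v = 1%:M.
    by rewrite -[u in f *m u](subrK 1%:M) mulmxDr mulmxDl fNv mulmx1 f_v addr0.
  rewrite /X bV_tensor_sub1_rank1 // uV fuv f_v !mxE eqxx mulr1 expr0n subr0.
  exact: oner_neq0.
by move: jd; rewrite jordan_mult_eq0 // (mxpow_eq0_leq X2).
Qed.

End Dimension2.

Theorem proposition12p3 (K : closedFieldType) (hK : 2%N \in [pchar K])
    (n : nat) (hn0 : (0 < n)%N) (hn : ~~ odd n)
    (u : 'M[K]_n) (hdet : \det u = 1) (hu : unipotent u) :
  distinguished (tensor_action u) (@bV K n) <-> (n = 2%N /\ iso_Vn u).
Proof.
have uU : u \in unitmx by rewrite unitmxE hdet unitr1.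
split=> [dist | [n2 iso]]; last first.
  subst n; case/iso_Vn2P: iso => NN [f [v fv]].
  exact (distinguished_tensor2 hK uU NN fv).
have [t [f0 [v [t0 Nt ft]]]] := exists_nilpotent_order hn0 hu.
have t2 := distinguished_tensor_nilpotent_order hK uU dist t0 Nt ft; subst t.
have NN : (u - 1%:M) *m (u - 1%:M) = 0 by rewrite -Nt mxpowS mxpow1.
rewrite mxpow1 in ft; have [f fv] := exists_jordan2_pair NN ft.
have n2 : n = 2%N.
  move: (distinguished_tensor_dim hK uU dist NN fv) hn0 hn.
  by move: (n) => m; case: m => [|[|[|]]].
subst n; split=> //; apply/iso_Vn2P; split=> //.
by exists f, v.
Qed.
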